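(* Let $X$ be a random variable, $Z$ a random variable jointly distributed with $X$, and $f,g$ real functions with $\mathbb{E}[f(X)^2],\mathbb{E}[g(X)^2]<\infty$. Then $$\operatorname{Var}\mathbb{E}[f(X)\mid Z]-\operatorname{Var}\mathbb{E}[g(X)\mid Z]\ge\frac12\Big\{\operatorname{Var}[f(X)]-\operatorname{Var}[g(X)]-\sqrt{(\operatorname{Var}[f(X)]+\operatorname{Var}[g(X)])^2-4\operatorname{Cov}(f(X),g(X))^2}\Big\}$$ and $$\operatorname{Var}\mathbb{E}[f(X)\mid Z]-\operatorname{Var}\mathbb{E}[g(X)\mid Z]\le\frac12\Big\{\operatorname{Var}[f(X)]-\operatorname{Var}[g(X)]+\sqrt{(\operatorname{Var}[f(X)]+\operatorname{Var}[g(X)])^2-4\operatorname{Cov}(f(X),g(X))^2}\Big\}.$$ *)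

From HB Require Import structures.
From mathcomp Require Import all_boot all_order all_algebra.
From mathcomp Require Import all_classical all_reals all_analysis.
Set Implicit Arguments. Unset Strict Implicit. Unset Printing Implicit Defensive.
Import Order.TTheory GRing.Theory Num.Theory.
Local Open Scope classical_set_scope.
Local Open Scope ring_scope.

Section Defs.
Context {d : measure_display} {T : measurableType d} {R : realType}.
Variable P : probability T R.

Definition mean (Y : T -> R) : R := Rintegral P setT Y.

Definition var (Y : T -> R) : R :=
  Rintegral P setT (fun x => (Y x - mean Y) ^+ 2).
Definition cov (Y1 Y2 : T -> R) : R :=
  Rintegral P setT (fun x => (Y1 x - mean Y1) * (Y2 x - mean Y2)).

Definition sigma_measurable {dZ : measure_display} {TZ : measurableType dZ}
  (Z : T -> TZ) (W : T -> R) : Prop :=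
  forall B : set R, measurable B ->
    exists C : set TZ, measurable C /\ W @^-1` B = Z @^-1` C.

(* W is a version of the conditional expectation E[Y | Z]
   (Kolmogorov's definition). *)
Definition is_cond_exp {dZ : measure_display} {TZ : measurableType dZ}
  (Z : T -> TZ) (Y W : T -> R) : Prop :=
  [/\ sigma_measurable Z W,
      P.-integrable setT (fun x => (W x)%:E) &
      forall C : set TZ, measurable C ->
        (\int[P]_(x in Z @^-1` C) (W x)%:E =
         \int[P]_(x in Z @^-1` C) (Y x)%:E)%E].
End Defs.

From HB Require Import structures.
From mathcomp Require Import all_boot all_order all_algebra.
From mathcomp Require Import all_classical all_reals all_analysis.
From mathcomp Require Import measurable_realfun ring lra.
Set Implicit Arguments. Unset Strict Implicit. Unset Printing Implicit Defensive.
Import Order.TTheory GRing.Theory Num.Theory.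
Local Open Scope classical_set_scope.
Local Open Scope ring_scope.

(** Write [r = Y - W] for the residual of [Y] off its conditional expectation [W]
    and [a = W - E Y].  The residual is orthogonal in L^2 to every square-integrable
    sigma(Z)-measurable function (the defining property of [W], extended from
    indicators to such multipliers by simple approximation and monotone convergence),
    and [W] is itself square-integrable (test against the clipped [W]).  Hence
    [Var Y = |a|^2 + |r|^2], [Var W = |a|^2], and for a second pair
    [Cov(Y, Y') = <a, a'> + <r, r'>].  Nonnegativity of [|t a - a'|^2 + |t r' - r|^2]
    for every real [t] gives [Cov^2 <= (|a|^2 + |r'|^2) (|a'|^2 + |r|^2)], which is
    exactly the claimed two-sided bound on [|a|^2 - |a'|^2]. *)

Lemma quadratic_ge0_sqr_le (R : realFieldType) (a b c : R) : 0 <= a ->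
  (forall t, 0 <= t ^+ 2 * a - 2 * t * b + c) -> b ^+ 2 <= a * c.
Proof.
move=> a_ge0 q_ge0; have [a_gt0|a_le0] := ltrP 0 a.
  have := q_ge0 (b / a); rewrite -(pmulr_rge0 _ a_gt0).
  have -> : a * ((b / a) ^+ 2 * a - 2 * (b / a) * b + c) = a * c - b ^+ 2.
    by field; rewrite gt_eqF.
  by rewrite subr_ge0.
have a0 : a = 0 by apply/eqP; rewrite eq_le a_le0 a_ge0.
have [-> | b_neq0] := eqVneq b 0; first by rewrite a0 expr0n mul0r.
have := q_ge0 ((c + 1) / (2 * b)).
have -> : ((c + 1) / (2 * b)) ^+ 2 * a - 2 * ((c + 1) / (2 * b)) * b + c = - 1.
  by rewrite a0; field.
by rewrite oppr_ge0 ler10.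
Qed.

Lemma sub_bounds_of_sqr_le (R : rcfType) (p p' q q' c : R) :
  0 <= p -> 0 <= p' -> 0 <= q -> 0 <= q' -> c ^+ 2 <= (p + q') * (q + p') ->
  let v := p + p' in let v' := q + q' in
  (v - v' - Num.sqrt ((v + v') ^+ 2 - 4 * c ^+ 2)) / 2 <= p - q /\
  p - q <= (v - v' + Num.sqrt ((v + v') ^+ 2 - 4 * c ^+ 2)) / 2.
Proof.
move=> p0 p'0 q0 q'0 c2_le v v'.
have x2_le : (p - p' - q + q') ^+ 2 <= (v + v') ^+ 2 - 4 * c ^+ 2.
  by rewrite /v /v'; nra.
have : `|p - p' - q + q'| <= Num.sqrt ((v + v') ^+ 2 - 4 * c ^+ 2).
  by rewrite -sqrtr_sqr ler_sqrt // (le_trans (sqr_ge0 _) x2_le).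
rewrite ler_norml /v /v'; lra.
Qed.

Definition clip (R : realDomainType) (N w : R) := Num.max (- N) (Num.min w N).

Lemma clip_sqr_le_mul (R : realDomainType) (N w : R) : 0 <= N ->
  clip N w ^+ 2 <= clip N w * w.
Proof.
move=> N_ge0; rewrite /clip maxEle minEle.
case: (lerP w N) => wN; case: (lerP (- N) _) => Nw //.
- by rewrite sqrrN expr2; nra.
- by rewrite expr2; nra.
- lra.
Qed.

Lemma norm_clip_le (R : realDomainType) (N w : R) : 0 <= N -> `|clip N w| <= N.
Proof.
move=> N_ge0; rewrite /clip maxEle minEle ler_norml.
by case: (lerP w N) => wN;
  [case: (lerP (- N) w) => Nw | case: (lerP (- N) N) => Nw]; apply/andP; split; lra.
Qed.

Lemma sqr_clip (R : realDomainType) (N w : R) : 0 <= N ->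
  clip N w ^+ 2 = Num.min (w ^+ 2) (N ^+ 2).
Proof.
move=> N_ge0; rewrite /clip maxEle !minEle.
case: (lerP w N) => wN; [case: (lerP (- N) w) => Nw | case: (lerP (- N) N) => Nw];
  case: (lerP (w ^+ 2) (N ^+ 2)) => w2N; rewrite ?sqrrN //; exfalso; nra.
Qed.

Section square_integrable.
Context d (T : measurableType d) (R : realType) (P : probability T R).
Implicit Types F G H K : T -> R.

Lemma integrable_le_norm F G : measurable_fun setT F -> (forall x, `|F x| <= `|G x|) ->
  P.-integrable setT (EFin \o G) -> P.-integrable setT (EFin \o F).
Proof.
move=> mF FG; apply: le_integrable => //; first exact/measurable_EFinP.
by move=> x _ /=; rewrite lee_fin.
Qed.

Lemma integrableD_EFin F G : P.-integrable setT (EFin \o F) ->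
  P.-integrable setT (EFin \o G) -> P.-integrable setT (EFin \o (F \+ G)).
Proof. exact: integrableD. Qed.

Lemma integrableZl_EFin (k : R) F : P.-integrable setT (EFin \o F) ->
  P.-integrable setT (EFin \o (fun x => k * F x)).
Proof. exact: integrableZl. Qed.

Lemma integrable_bounded_mul F G (N : R) : measurable_fun setT F ->
  (forall x, `|F x| <= N) -> P.-integrable setT (EFin \o G) ->
  P.-integrable setT (EFin \o (F \* G)).
Proof.
move=> mF F_le iG; apply: (integrable_le_norm (G := fun x => N * G x)).
- by apply: measurable_funM => //; apply/measurable_EFinP; exact: measurable_int iG.
- move=> x; rewrite /= !normrM ler_wpM2r //.
  exact: le_trans (F_le x) (ler_norm N).
- exact: integrableZl_EFin.
Qed.

Definition square_integrable F :=
  measurable_fun setT F /\ P.-integrable setT (EFin \o (fun x => F x ^+ 2)).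

Lemma square_integrable_cst (k : R) : square_integrable (cst k).
Proof.
split; first exact: measurable_cst.
by change (P.-integrable setT (EFin \o cst (k ^+ 2))); apply: finite_measure_integrable_cst.
Qed.

Lemma square_integrable_integrable F : square_integrable F ->
  P.-integrable setT (EFin \o F).
Proof.
case=> mF F2; apply: (@integrable_le_norm _ (fun x => 1 + F x ^+ 2)) => //; last first.
  exact: integrableD_EFin (finite_measure_integrable_cst P 1 measurableT) F2.
move=> x; rewrite [leRHS]ger0_norm; last by have := sqr_ge0 (F x); lra.
have := sqr_ge0 (`|F x| - 1); rewrite -(real_normK (num_real (F x))); nra.
Qed.

Lemma integrable_mul_square F G : square_integrable F -> square_integrable G ->
  P.-integrable setT (EFin \o (F \* G)).
Proof.
case=> mF F2 [mG G2]; apply: (@integrable_le_norm _ (fun x => F x ^+ 2 + G x ^+ 2)).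
- exact: measurable_funM.
- move=> x; rewrite normrM [leRHS]ger0_norm; last first.
    by have := sqr_ge0 (F x); have := sqr_ge0 (G x); lra.
  rewrite -(real_normK (num_real (F x))) -(real_normK (num_real (G x))).
  by have := sqr_ge0 (`|F x| - `|G x|); nra.
- exact: integrableD_EFin.
Qed.

Lemma square_integrable_comb F G (a b : R) : square_integrable F -> square_integrable G ->
  square_integrable (fun x => a * F x + b * G x).
Proof.
move=> [mF F2] [mG G2]; split.
  by apply: measurable_funD; apply: measurable_funM.
apply: (@integrable_le_norm _ (fun x => 2 * a ^+ 2 * F x ^+ 2 + 2 * b ^+ 2 * G x ^+ 2)).
- by apply: measurable_funX; apply: measurable_funD; apply: measurable_funM.
- move=> x; rewrite ger0_norm ?sqr_ge0 // ger0_norm; last first.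
    by have := sqr_ge0 (a * F x); have := sqr_ge0 (b * G x); rewrite !exprMn; lra.
  by have := sqr_ge0 (a * F x - b * G x); nra.
- by apply: integrableD_EFin; apply: integrableZl_EFin.
Qed.

Lemma square_integrableB F G : square_integrable F -> square_integrable G ->
  square_integrable (F \- G).
Proof.
move=> F2 G2; suff -> : F \- G = (fun x => 1 * F x + (-1) * G x).
  exact: square_integrable_comb.
by apply/funext => x /=; ring.
Qed.

Lemma cov_diag F : cov P F F = var P F.
Proof. by apply: eq_Rintegral => x _; rewrite expr2. Qed.

Definition inner F G := Rintegral P setT (fun x => F x * G x).

Lemma innerC F G : inner F G = inner G F.
Proof. by apply: eq_Rintegral => x _; rewrite mulrC. Qed.

Lemma inner_self_ge0 F : 0 <= inner F F.
Proof. by apply: Rintegral_ge0 => x _; rewrite -expr2 sqr_ge0. Qed.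

Lemma inner_combE F G H K (a b c e : R) :
  square_integrable F -> square_integrable G -> square_integrable H -> square_integrable K ->
  inner (fun x => a * F x + b * G x) (fun x => c * H x + e * K x) =
  a * c * inner F H + a * e * inner F K + b * c * inner G H + b * e * inner G K.
Proof.
move=> F2 G2 H2 K2.
have iFH := integrableZl_EFin (a * c) (integrable_mul_square F2 H2).
have iFK := integrableZl_EFin (a * e) (integrable_mul_square F2 K2).
have iGH := integrableZl_EFin (b * c) (integrable_mul_square G2 H2).
have iGK := integrableZl_EFin (b * e) (integrable_mul_square G2 K2).
rewrite /inner (@eq_Rintegral _ _ _ P setT (fun x => a * c * (F x * H x)
  + a * e * (F x * K x) + b * c * (G x * H x) + b * e * (G x * K x))); last first.
  by move=> x _; ring.
rewrite !RintegralD //; try by do ?apply: integrableD_EFin.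
by rewrite !RintegralZl //; apply: integrable_mul_square.
Qed.

End square_integrable.

Section sigma_preimage.
Context d (T : measurableType d) (R : realType) (P : probability T R).
Context dZ (TZ : measurableType dZ) (Z : T -> TZ).
Hypothesis mZ : measurable_fun setT Z.
Local Notation TsZ := (g_sigma_algebra_preimageType Z).
Implicit Types (F G Y W : T -> R).

Lemma sub_measurable (A : set TsZ) : measurable A -> measurable (A : set T).
Proof. by case=> B mB <-; exact: mZ. Qed.

Lemma sub_measurable_fun (h : TsZ -> R) :
  measurable_fun setT h -> measurable_fun (setT : set T) h.
Proof. by move=> mh _ B mB; apply: sub_measurable; exact: mh. Qed.

Definition same_integrals_on_sigma F G := forall A : set TsZ, measurable A ->
  (\int[P]_(x in (A : set T)) (F x)%:E = \int[P]_(x in (A : set T)) (G x)%:E)%E.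

Import HBNNSimple.

Lemma nnsfun_mul_integral_eq (h : {nnsfun TsZ >-> R}) F G :
  measurable_fun setT F -> measurable_fun setT G ->
  (forall x, 0 <= F x) -> (forall x, 0 <= G x) -> same_integrals_on_sigma F G ->
  (\int[P]_x (h x * F x)%:E = \int[P]_x (h x * G x)%:E)%E.
Proof.
move=> mF mG F_ge0 G_ge0 FG.
have mh : measurable_fun (setT : set T) (h : T -> R).
  by apply: sub_measurable_fun; exact: measurable_funP.
have mh1 y : measurable ((h @^-1` [set y]) : set T).
  by rewrite -[X in measurable X]setTI; apply: mh.
suff sum_levels F' : measurable_fun setT F' -> (forall x, 0 <= F' x) ->
    (\int[P]_x (h x * F' x)%:E = \sum_(y \in range h)
       (y%:E * \int[P]_(x in ((h @^-1` [set y]) : set T)) (F' x)%:E))%E.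
  rewrite sum_levels // sum_levels //; apply: eq_fsbigr => y _.
  by rewrite FG //; exact: measurable_sfunP.
move=> mF' F'_ge0.
have -> : (fun x => (h x * F' x)%:E) =
    (fun x => \sum_(y \in range h) ((y * \1_(h @^-1` [set y]) x * F' x)%:E))%E.
  apply/funext => x; rewrite fsumEFin //; congr EFin.
  by rewrite {1}fimfunE mulr_fsuml.
rewrite ge0_integral_fsum //; last first.
- move=> y x _; rewrite lee_fin; apply: mulr_ge0 => //.
  rewrite indicE; case: (boolP (x \in _)) => [/set_mem /= <-|_]; last by rewrite mulr0.
  by rewrite mulr1; exact: fun_ge0.
- move=> y; apply/measurable_EFinP; apply: measurable_funM => //.
  by apply: measurable_funM => //; exact: measurable_indic.
apply: eq_fsbigr => y /set_mem [z _ <-].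
rewrite [in RHS]integral_mkcond [in RHS]epatch_indic -ge0_integralZl //; last 3 first.
- apply: emeasurable_funM; first exact/measurable_EFinP.
  by apply/measurable_EFinP; apply: measurable_indic; exact: mh1.
- by move=> x _; apply: mule_ge0; rewrite lee_fin //; apply: indic_ge0.
- by rewrite lee_fin; exact: fun_ge0.
apply: eq_integral => x _ /=; rewrite -!EFinM; congr EFin.
by rewrite mulrAC mulrA.
Qed.

Lemma ge0_mul_integral_eq (h : TsZ -> R) F G :
  measurable_fun setT h -> (forall x, 0 <= h x) ->
  measurable_fun setT F -> measurable_fun setT G ->
  (forall x, 0 <= F x) -> (forall x, 0 <= G x) -> same_integrals_on_sigma F G ->
  (\int[P]_x (h x * F x)%:E = \int[P]_x (h x * G x)%:E)%E.
Proof.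
move=> mh h_ge0 mF mG F_ge0 G_ge0 FG.
have mEh : measurable_fun (setT : set TsZ) (EFin \o h) by exact/measurable_EFinP.
pose hn := nnsfun_approx measurableT mEh.
have approxE F' : measurable_fun setT F' -> (forall x, 0 <= F' x) ->
    (\int[P]_x (h x * F' x)%:E = limn (fun n => \int[P]_x (hn n x * F' x)%:E))%E.
  move=> mF' F'_ge0.
  transitivity (\int[P]_x limn (fun n => (hn n x * F' x)%:E))%E.
    apply: eq_integral => x _; apply/esym/cvg_lim => //.
    under eq_fun do rewrite EFinM.
    rewrite EFinM; apply: cvgeZr => //.
    by apply: cvg_nnsfun_approx => // y _; rewrite lee_fin.
  apply: monotone_convergence => //.
  - move=> n; apply/measurable_EFinP; apply: measurable_funM => //.
    by apply: sub_measurable_fun; exact: measurable_funP.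
  - by move=> n x _; rewrite lee_fin; apply: mulr_ge0 => //; exact: fun_ge0.
  - move=> x _ m n mn; rewrite lee_fin; apply: ler_wpM2r => //.
    by have := nd_nnsfun_approx (@measurableT _ TsZ) mEh mn => /lefP; apply.
rewrite approxE // approxE //; congr (limn _); apply/funext => n.
exact: nnsfun_mul_integral_eq.
Qed.

Lemma ge0_mul_Rintegral_eq (h : TsZ -> R) F G :
  measurable_fun setT h -> (forall x, 0 <= h x) ->
  P.-integrable setT (EFin \o F) -> P.-integrable setT (EFin \o G) ->
  same_integrals_on_sigma F G ->
  P.-integrable setT (EFin \o (h \* F)) -> P.-integrable setT (EFin \o (h \* G)) ->
  Rintegral P setT (h \* F) = Rintegral P setT (h \* G).
Proof.
move=> mh h_ge0 iF iG FG ihF ihG.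
have mF : measurable_fun setT F by apply/measurable_EFinP; exact: measurable_int iF.
have mG : measurable_fun setT G by apply/measurable_EFinP; exact: measurable_int iG.
pose s x := `|F x| + `|G x|.
have ms : measurable_fun setT s by apply: measurable_funD; exact: measurableT_comp.
have iS : P.-integrable setT (EFin \o s).
  by apply: integrableD_EFin; exact: integrable_norm.
have ihs : P.-integrable setT (EFin \o (h \* s)).
  apply: (@integrable_le_norm _ _ _ P (h \* s) (fun x => `|h x * F x| + `|h x * G x|)).
  - by apply: measurable_funM => //; exact: sub_measurable_fun.
  - move=> x; rewrite /= [leRHS]ger0_norm ?addr_ge0 // !normrM (ger0_norm (h_ge0 x)).
    by rewrite [`|_ + _|]ger0_norm ?addr_ge0 // mulrDr.
  - by apply: integrableD_EFin; exact: integrable_norm.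
have Fs_ge0 x : 0 <= F x + s x.
  by have := ler_norm (- F x); have := normr_ge0 (G x); rewrite normrN /s; lra.
have Gs_ge0 x : 0 <= G x + s x.
  by have := ler_norm (- G x); have := normr_ge0 (F x); rewrite normrN /s; lra.
have FGs : same_integrals_on_sigma (F \+ s) (G \+ s).
  move=> A mA; have mAT := sub_measurable mA.
  have iA k : P.-integrable setT (EFin \o k) -> P.-integrable (A : set T) (EFin \o k).
    by apply: integrableS.
  by rewrite !integralD_EFin ?FG //; apply: iA => //; exact: integrable_norm.
have : Rintegral P setT (h \* F \+ h \* s) = Rintegral P setT (h \* G \+ h \* s).
  rewrite /Rintegral; congr fine.
  under eq_integral do rewrite /= -mulrDr.
  under [RHS]eq_integral do rewrite /= -mulrDr.
  by apply: ge0_mul_integral_eq => //; apply: measurable_funD.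
by rewrite !RintegralD // => /addIr.
Qed.

Lemma mul_Rintegral_eq (h : TsZ -> R) F G : measurable_fun setT h ->
  P.-integrable setT (EFin \o F) -> P.-integrable setT (EFin \o G) ->
  same_integrals_on_sigma F G ->
  P.-integrable setT (EFin \o (h \* F)) -> P.-integrable setT (EFin \o (h \* G)) ->
  Rintegral P setT (h \* F) = Rintegral P setT (h \* G).
Proof.
move=> mh iF iG FG ihF ihG.
have mF : measurable_fun setT F by apply/measurable_EFinP; exact: measurable_int iF.
have mG : measurable_fun setT G by apply/measurable_EFinP; exact: measurable_int iG.
pose h' x := `|h x|.
have mh' : measurable_fun setT h' by exact: measurableT_comp.
have h'_integrable F' : measurable_fun setT F' -> P.-integrable setT (EFin \o (h \* F')) ->
    P.-integrable setT (EFin \o (h' \* F')).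
  move=> mF' ihF'; apply: integrable_le_norm ihF'.
    by apply: measurable_funM => //; exact: sub_measurable_fun.
  by move=> x; rewrite /= !normrM normr_id.
have hh'_integrable F' : measurable_fun setT F' -> P.-integrable setT (EFin \o (h \* F')) ->
    P.-integrable setT (EFin \o ((h \+ h') \* F')).
  move=> mF' ihF'; have := integrableD_EFin ihF' (h'_integrable F' mF' ihF').
  by apply: eq_integrable => // x _ /=; rewrite mulrDl.
have hh'_ge0 x : 0 <= h x + h' x by have := ler_norm (- h x); rewrite normrN /h' /=; lra.
have splitE F' : measurable_fun setT F' -> P.-integrable setT (EFin \o (h \* F')) ->
    Rintegral P setT (h \* F') =
    Rintegral P setT ((h \+ h') \* F') - Rintegral P setT (h' \* F').
  move=> mF' ihF'; rewrite -RintegralB //; last exact: h'_integrable.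
    by apply: eq_Rintegral => x _ /=; ring.
  exact: hh'_integrable.
rewrite splitE // (splitE G) // !(@ge0_mul_Rintegral_eq _ F G) //.
- by move=> x; exact: normr_ge0.
- exact: h'_integrable.
- exact: h'_integrable.
- exact: measurable_funD.
- exact: hh'_integrable.
- exact: hh'_integrable.
Qed.

Lemma cond_exp_sigma Y W : is_cond_exp P Z Y W ->
  [/\ measurable_fun (setT : set TsZ) W, P.-integrable setT (EFin \o W)
    & same_integrals_on_sigma W Y].
Proof.
case=> sW iW WY; split => //.
  move=> _ B mB; have [C [mC E]] := sW B mB.
  by exists C => //; rewrite E.
by move=> A [B mB <-]; rewrite setTI; exact: WY.
Qed.

Section cond_exp.
Variables Y W : T -> R.
Hypotheses (Y2 : square_integrable P Y) (mW : measurable_fun (setT : set TsZ) W)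
  (iW : P.-integrable setT (EFin \o W)) (WY : same_integrals_on_sigma W Y).

Lemma Rintegral_sqr_clip_cond_exp_le (N : R) : 0 <= N ->
  Rintegral P setT (fun x => clip N (W x) ^+ 2) <= Rintegral P setT (fun x => Y x ^+ 2).
Proof.
(* [E c^2 <= E[c W] = E[c Y] <= (E c^2 + E Y^2) / 2] for the clipped [c] of [W]. *)
move=> N_ge0; pose c x := clip N (W x).
change (Rintegral P setT (fun x => c x ^+ 2) <= Rintegral P setT (fun x => Y x ^+ 2)).
have iY := square_integrable_integrable Y2.
have mc : measurable_fun (setT : set TsZ) c.
  exact: measurable_maxr (measurable_cst (- N)) (measurable_minr mW (measurable_cst N)).
have mcT := sub_measurable_fun mc.
have c_le x : `|c x| <= N by exact: norm_clip_le.
have c2 : square_integrable P c.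
  split => //; apply: (integrable_le_norm (G := cst (N ^+ 2))).
  - exact: measurable_funX.
  - move=> x; rewrite /= !ger0_norm ?sqr_ge0 // -real_normK ?num_real //.
    by rewrite lerXn2r ?nnegrE.
  - exact: finite_measure_integrable_cst.
have icY := integrable_mul_square c2 Y2.
have icW : P.-integrable setT (EFin \o (c \* W)) by exact: integrable_bounded_mul c_le iW.
have cW_cY : Rintegral P setT (c \* W) = Rintegral P setT (c \* Y).
  exact: mul_Rintegral_eq.
have c2_le_cW : Rintegral P setT (fun x => c x ^+ 2) <= Rintegral P setT (c \* W).
  by apply: le_Rintegral => //; [exact: c2.2 | move=> x _; exact: clip_sqr_le_mul].
have cY_le : Rintegral P setT (c \* Y) <=
    Rintegral P setT (fun x => 2^-1 * (c x ^+ 2 + Y x ^+ 2)).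
  apply: le_Rintegral => //.
    by apply: integrableZl_EFin; exact: integrableD_EFin c2.2 Y2.2.
  by move=> x _; have := sqr_ge0 (c x - Y x); rewrite /=; lra.
rewrite RintegralZl ?RintegralD // in cY_le; [lra | exact: c2.2 | exact: Y2.2 | ].
exact: integrableD_EFin c2.2 Y2.2.
Qed.

Lemma square_integrable_cond_exp : square_integrable P W.
Proof.
have mWT := sub_measurable_fun mW.
pose c2 n x := clip n%:R (W x) ^+ 2.
have mc2 n : measurable_fun setT (c2 n).
  apply: measurable_funX.
  exact: measurable_maxr (measurable_cst _) (measurable_minr mWT (measurable_cst _)).
have c2_nd x : nondecreasing_seq (fun n => (c2 n x)%:E).
  move=> m n mn; rewrite lee_fin /c2 !sqr_clip ?ler0n // le_min2 //.
  by rewrite lerXn2r ?nnegrE ?ler0n // ler_nat.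
have c2_cvg x : (fun n => (c2 n x)%:E) @ \oo --> (W x ^+ 2)%:E.
  apply: cvg_near_cst; exists (Num.truncn `|W x|).+1 => // n /= le_n.
  rewrite /c2 sqr_clip ?ler0n // min_l // -real_normK ?num_real //.
  rewrite lerXn2r ?nnegrE ?ler0n //; apply/ltW/(lt_le_trans (truncnS_gt _)).
  by rewrite ler_nat.
have W2_le : (\int[P]_x (W x ^+ 2)%:E <= (Rintegral P setT (fun x => Y x ^+ 2))%:E)%E.
  rewrite (eq_integral (fun x => limn (fun n => (c2 n x)%:E))); last first.
    by move=> x _; apply/esym/cvg_lim.
  rewrite monotone_convergence //; last 2 first.
  - by move=> n; exact/measurable_EFinP.
  - by move=> n x _; rewrite lee_fin sqr_ge0.
  apply: lime_le.
    apply: ereal_nondecreasing_is_cvgn => m n mn; apply: ge0_le_integral => //.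
    - by move=> x _; rewrite lee_fin sqr_ge0.
    - exact/measurable_EFinP.
    - exact/measurable_EFinP.
    - by move=> x _; exact: c2_nd.
  apply: nearW => n; have c2_int : P.-integrable setT (EFin \o c2 n).
    apply: (integrable_le_norm (G := cst (n%:R ^+ 2))) => //.
    - move=> x; rewrite /c2 /= !ger0_norm ?sqr_ge0 // -real_normK ?num_real //.
      by rewrite lerXn2r ?nnegrE ?ler0n // norm_clip_le.
    - exact: finite_measure_integrable_cst.
  rewrite -(fineK (integrable_fin_num _ c2_int)) // lee_fin.
  exact: Rintegral_sqr_clip_cond_exp_le.
split => //; apply/integrableP; split.
  by apply/measurable_EFinP; exact: measurable_funX.
rewrite (eq_integral (fun x => (W x ^+ 2)%:E)); last first.
  by move=> x _ /=; rewrite ger0_norm // sqr_ge0.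
exact: le_lt_trans W2_le (ltry _).
Qed.

Lemma mean_cond_exp : mean P W = mean P Y.
Proof. by rewrite /mean /Rintegral (WY measurableT). Qed.

Lemma cond_exp_orthogonal (h : TsZ -> R) : measurable_fun setT h ->
  square_integrable P h -> inner P h (Y \- W) = 0.
Proof.
move=> mh h2; have W2 := square_integrable_cond_exp.
rewrite /inner; under eq_Rintegral do rewrite /= mulrBr.
rewrite RintegralB //; try exact: integrable_mul_square.
apply/eqP; rewrite subr_eq0; apply/eqP/esym.
apply: mul_Rintegral_eq => //; first exact: square_integrable_integrable.
all: exact: integrable_mul_square.
Qed.

End cond_exp.

Lemma var_cond_exp Y W : is_cond_exp P Z Y W ->
  var P W = inner P (W \- cst (mean P Y)) (W \- cst (mean P Y)).
Proof.
case/cond_exp_sigma => _ _ WY; rewrite /var (mean_cond_exp WY).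
by apply: eq_Rintegral => x _; rewrite expr2.
Qed.

Lemma cov_cond_exp Y1 Y2 W1 W2 : square_integrable P Y1 -> square_integrable P Y2 ->
  is_cond_exp P Z Y1 W1 -> is_cond_exp P Z Y2 W2 ->
  cov P Y1 Y2 = inner P (W1 \- cst (mean P Y1)) (W2 \- cst (mean P Y2))
    + inner P (Y1 \- W1) (Y2 \- W2).
Proof.
move=> Y1_2 Y2_2 /cond_exp_sigma[mW1 iW1 W1Y1] /cond_exp_sigma[mW2 iW2 W2Y2].
have W1_2 := square_integrable_cond_exp Y1_2 mW1 iW1 W1Y1.
have W2_2 := square_integrable_cond_exp Y2_2 mW2 iW2 W2Y2.
pose a := W1 \- cst (mean P Y1); pose r := Y1 \- W1.
pose b := W2 \- cst (mean P Y2); pose s := Y2 \- W2.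
have a2 : square_integrable P a := square_integrableB W1_2 (square_integrable_cst P _).
have b2 : square_integrable P b := square_integrableB W2_2 (square_integrable_cst P _).
have ma : measurable_fun (setT : set TsZ) a := measurable_funB mW1 (measurable_cst _).
have mb : measurable_fun (setT : set TsZ) b := measurable_funB mW2 (measurable_cst _).
rewrite /cov (@eq_Rintegral _ _ _ P setT
  (fun x => (1 * a x + 1 * r x) * (1 * b x + 1 * s x))); last first.
  by move=> x _; rewrite /a /b /r /s /=; ring.
rewrite -/(inner _ _ _) inner_combE //; try exact: square_integrableB.
rewrite (innerC P r b) (cond_exp_orthogonal Y1_2 mW1 iW1 W1Y1 mb b2).
by rewrite (cond_exp_orthogonal Y2_2 mW2 iW2 W2Y2 ma a2); ring.
Qed.

Lemma var_cond_exp_bounds Y1 Y2 W1 W2 :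
  square_integrable P Y1 -> square_integrable P Y2 ->
  is_cond_exp P Z Y1 W1 -> is_cond_exp P Z Y2 W2 ->
  let v1 := var P Y1 in let v2 := var P Y2 in let c := cov P Y1 Y2 in
  (v1 - v2 - Num.sqrt ((v1 + v2) ^+ 2 - 4 * c ^+ 2)) / 2 <= var P W1 - var P W2 /\
  var P W1 - var P W2 <= (v1 - v2 + Num.sqrt ((v1 + v2) ^+ 2 - 4 * c ^+ 2)) / 2.
Proof.
move=> Y1_2 Y2_2 hW1 hW2 v1 v2 c.
have [mW1 iW1 W1Y1] := cond_exp_sigma hW1.
have [mW2 iW2 W2Y2] := cond_exp_sigma hW2.
have W1_2 := square_integrable_cond_exp Y1_2 mW1 iW1 W1Y1.
have W2_2 := square_integrable_cond_exp Y2_2 mW2 iW2 W2Y2.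
pose a := W1 \- cst (mean P Y1); pose r := Y1 \- W1.
pose b := W2 \- cst (mean P Y2); pose s := Y2 \- W2.
have a2 : square_integrable P a := square_integrableB W1_2 (square_integrable_cst P _).
have b2 : square_integrable P b := square_integrableB W2_2 (square_integrable_cst P _).
have r2 : square_integrable P r := square_integrableB Y1_2 W1_2.
have s2 : square_integrable P s := square_integrableB Y2_2 W2_2.
have quad t : 0 <= t ^+ 2 * (inner P a a + inner P s s)
    - 2 * t * (inner P a b + inner P r s) + (inner P b b + inner P r r).
  have := inner_self_ge0 P (fun x => t * a x + (-1) * b x).
  have := inner_self_ge0 P (fun x => t * s x + (-1) * r x).
  rewrite !inner_combE // (innerC P b a) (innerC P r s); nra.
have := quadratic_ge0_sqr_le (addr_ge0 (inner_self_ge0 P a) (inner_self_ge0 P s)) quad.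
move=> /(sub_bounds_of_sqr_le (inner_self_ge0 P a) (inner_self_ge0 P r)
  (inner_self_ge0 P b) (inner_self_ge0 P s)).
rewrite (var_cond_exp hW1) (var_cond_exp hW2) /v1 /v2 /c -!cov_diag.
by rewrite !(cov_cond_exp Y1_2 Y1_2 hW1 hW1, cov_cond_exp Y2_2 Y2_2 hW2 hW2,
  cov_cond_exp Y1_2 Y2_2 hW1 hW2).
Qed.

End sigma_preimage.

Theorem lemma5 (d : measure_display) (T : measurableType d) (R : realType)
  (P : probability T R)
  (dX : measure_display) (TX : measurableType dX) (X : T -> TX)
  (dZ : measure_display) (TZ : measurableType dZ) (Z : T -> TZ)
  (f g : TX -> R)
  (mX : measurable_fun setT X) (mZ : measurable_fun setT Z)
  (mf : measurable_fun setT f) (mg : measurable_fun setT g)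
  (f2 : P.-integrable setT (fun x => ((f (X x)) ^+ 2)%:E))
  (g2 : P.-integrable setT (fun x => ((g (X x)) ^+ 2)%:E))
  (Wf Wg : T -> R)
  (hWf : is_cond_exp P Z (f \o X) Wf)
  (hWg : is_cond_exp P Z (g \o X) Wg) :
  let vf := var P (f \o X) in
  let vg := var P (g \o X) in
  let c := cov P (f \o X) (g \o X) in
  (vf - vg - Num.sqrt ((vf + vg) ^+ 2 - 4 * c ^+ 2)) / 2
    <= var P Wf - var P Wg /\
  var P Wf - var P Wg
    <= (vf - vg + Num.sqrt ((vf + vg) ^+ 2 - 4 * c ^+ 2)) / 2.
Proof.
have fX2 : square_integrable P (f \o X) by split; [exact: measurableT_comp | exact: f2].
have gX2 : square_integrable P (g \o X) by split; [exact: measurableT_comp | exact: g2].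
exact: (var_cond_exp_bounds mZ fX2 gX2 hWf hWg).
Qed.
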